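(* Let $w\in P_4$ be one of the monomials $x_1x_2^{6}x_3^{6}x_4$, $x_1x_2^{2}x_3^{6}x_4^{5}$, $x_1x_2^{6}x_3^{2}x_4^{5}$, $x_1x_2^{6}x_3^{3}x_4^{4}$, $x_1^{3}x_2^{4}x_3x_4^{6}$, $x_1^{3}x_2^{4}x_3^{5}x_4^{2}$, $x_1^{3}x_2^{5}x_3^{4}x_4^{2}$, $x_1^{3}x_2^{4}x_3^{3}x_4^{4}$, $x_1^{3}x_2^{4}x_3^{4}x_4^{3}$. Then for every $1\le i\le5$ the monomial $x_i^7f_i(w)\in P_5$ is strictly inadmissible.
   Context: $P_k=\mathbb F_2[x_1,\dots,x_k]$, $\deg x_i=1$, modules over the mod-2 Steenrod algebra $\mathcal A$. For $1\le i\le5$, $f_i:P_4\to P_5$ is the algebra homomorphism with $f_i(x_u)=x_u$ for $u<i$ and $f_i(x_u)=x_{u+1}$ for $i\le u\le4$. $\mathcal A(s-1)$ is the sub-Hopf algebra generated by $Sq^r$, $0\le r<2^s$, with augmentation ideal $\mathcal A(s-1)^+$. For $x=x_1^{a_1}\cdots x_5^{a_5}$: weight vector $\omega_i(x)=\sum_j\alpha_{i-1}(a_j)$ ($\alpha_r(a)$ the $r$-th binary digit), exponent vector $\sigma(x)=(a_1,\dots,a_5)$, both ordered left-lexicographically; for monomials of equal degree, $x<y$ iff $\omega(x)<\omega(y)$, or $\omega(x)=\omega(y)$ and $\sigma(x)<\sigma(y)$. $P_5^-(\omega)$ is spanned by monomials $y$ of degree $\sum_i2^{i-1}\omega_i$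 with $\omega(y)<\omega$. A monomial $x$ is strictly inadmissible if there are monomials $y_1,\dots,y_r<x$ with $x+\sum_jy_j\in\mathcal A(s-1)^+P_5+P_5^-(\omega(x))$, where $s=\max\{i:\omega_i(x)>0\}$. *)

(* The polynomial algebra P_k = F_2[x_1,...,x_k] is modelled explicitly as the
   F_2-vector space with basis the monomials: a monomial x_1^{a_1}...x_k^{a_k}
   is its exponent vector [:: a_1; ...; a_k] : seq nat, and a polynomial is a
   finite list of monomials, the coefficient of a monomial being the parity of
   its number of occurrences (so list concatenation is addition over F_2). *)
From mathcomp Require Import all_boot.
Set Implicit Arguments. Unset Strict Implicit. Unset Printing Implicit Defensive.

Definition mon := seq nat.
Definition poly := seq mon.

Definition coef (p : poly) (m : mon) : bool := odd (count_mem m p).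

Definition peq (p q : poly) : Prop := forall m, coef p m = coef q m.

Definition isP5 (p : poly) : bool := all (fun m => size m == 5) p.

Definition deg (m : mon) : nat := sumn m.

Definition alpha (r a : nat) : nat := odd (a %/ 2 ^ r).

(* omega_{r+1}(x) = sum_j alpha_r(a_j) *)
Definition wt (r : nat) (m : mon) : nat := sumn [seq alpha r a | a <- m].

Definition omega_n (n : nat) (m : mon) : seq nat := [seq wt r m | r <- iota 0 n].

(* the weight vector; every exponent is <= deg x < 2^(trunc_log 2 (deg x) + 1),
   so all omega_i(x) with i > trunc_log 2 (deg x) + 1 vanish, and this finite
   list carries the whole (infinite, eventually zero) vector *)
Definition omega (m : mon) : seq nat := omega_n (trunc_log 2 (deg m)).+1 m.

Fixpoint ltlex (s t : seq nat) : bool :=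
  match s, t with
  | a :: s', b :: t' => (a < b) || ((a == b) && ltlex s' t')
  | _, _ => false
  end.

Definition mon_lt (x y : mon) : bool :=
  (deg x == deg y) &&
  (ltlex (omega x) (omega y) || ((omega x == omega y) && ltlex x y)).

Definition wdeg (om : seq nat) : nat :=
  sumn [seq 2 ^ i * nth 0 om i | i <- iota 0 (size om)].

Definition in_Pminus (om : seq nat) (y : mon) : bool :=
  (size y == 5) && (deg y == wdeg om) && ltlex (omega_n (size om) y) om.

Definition smax (x : mon) : nat :=
  foldr maxn 0 [seq i.+1 | i <- iota 0 (size (omega x)) & 0 < nth 0 (omega x) i].

(* Steenrod squares on monomials, via Sq^k(x^a) = C(a,k) x^{a+k} and the
   Cartan formula *)
Fixpoint sqm (r : nat) (m : mon) : poly :=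
  match m with
  | [::] => if r == 0 then [:: [::]] else [::]
  | a :: m' =>
      flatten [seq [seq (a + k) :: t | t <- sqm (r - k) m']
              | k <- iota 0 r.+1 & odd 'C(a, k)]
  end.

Definition Sq (r : nat) (p : poly) : poly := flatten [seq sqm r m | m <- p].

(* An element of A(s-1)^+ P_5, given as sum_k Sq^{r_k}(g_k) with 0 < r_k < 2^s,
   g_k in P_5.  Since A(s-1)^+ is spanned by the words Sq^{r_1}...Sq^{r_n}
   (n >= 1, 0 < r_j < 2^s), A(s-1)^+ P_5 is exactly the span of such terms. *)
Definition Aplus_sum (gens : seq (nat * poly)) : poly :=
  flatten [seq Sq gr.1 gr.2 | gr <- gens].

Definition valid_gens (s : nat) (gens : seq (nat * poly)) : bool :=
  all (fun gr => (0 < gr.1 < 2 ^ s) && isP5 gr.2) gens.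

Definition strictly_inadmissible (x : mon) : Prop :=
  exists (ys : seq mon) (gens : seq (nat * poly)) (l : poly),
    all (fun y => (size y == 5) && mon_lt y x) ys /\
    valid_gens (smax x) gens /\
    all (in_Pminus (omega x)) l /\
    peq (x :: ys) (Aplus_sum gens ++ l).

Definition f_mon (i : nat) (w : mon) : mon :=
  take i.-1 w ++ 0 :: drop i.-1 w.

Definition mulx (i e : nat) (m : mon) : mon :=
  set_nth 0 m i.-1 (nth 0 m i.-1 + e).

Definition ws : seq mon :=
  [:: [:: 1; 6; 6; 1]; [:: 1; 2; 6; 5]; [:: 1; 6; 2; 5]; [:: 1; 6; 3; 4];
      [:: 3; 4; 1; 6]; [:: 3; 4; 5; 2]; [:: 3; 5; 4; 2]; [:: 3; 4; 3; 4];
      [:: 3; 4; 4; 3]].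

(* Each monomial x = x_i^7 f_i(w) admits an explicit relation
     x + sum_j y_j = sum_k Sq^{r_k}(g_k) + l
   with monomials y_j < x, 0 < r_k < 2^s and l of weight vector < omega(x),
   found by computer search.  Since Sq^r acts on monomials by the Cartan formula
   and polynomials over F_2 are compared coefficientwise, checking such a
   relation is a finite computation. *)
From mathcomp Require Import all_boot.
Set Implicit Arguments. Unset Strict Implicit. Unset Printing Implicit Defensive.

Definition peqb (p q : poly) : bool :=
  all (fun m => coef p m == coef q m) (p ++ q).

Lemma peqP p q : reflect (peq p q) (peqb p q).
Proof.
apply: (iffP allP) => [eq_pq m | eq_pq m _]; last by rewrite eq_pq.
have [/eq_pq/eqP // | ] := boolP (m \in p ++ q).
rewrite mem_cat negb_or => /andP [m_notin_p m_notin_q].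
by rewrite /coef (count_memPn m_notin_p) (count_memPn m_notin_q).
Qed.

Definition certificate := (seq mon * seq (nat * poly) * poly)%type.

Definition certifies (x : mon) (c : certificate) : bool :=
  let: (ys, gens, l) := c in
  [&& all (fun y => (size y == 5) && mon_lt y x) ys,
      valid_gens (smax x) gens,
      all (in_Pminus (omega x)) l &
      peqb (x :: ys) (Aplus_sum gens ++ l)].

Lemma certifies_strictly_inadmissible x c :
  certifies x c -> strictly_inadmissible x.
Proof.
case: c => [[ys gens] l] /and4P [ys_lt gens_ok l_lower /peqP rel].
by exists ys, gens, l.
Qed.

Definition certificates : seq (mon * certificate) := [::
  ([:: 7; 1; 6; 6; 1], ([:: [:: 7; 1; 3; 6; 4]; [:: 7; 1; 6; 5; 2]], [:: (1, [:: [:: 7; 1; 3; 5; 4]]); (1, [:: [:: 7; 1; 5; 5; 2]]); (1, [:: [:: 7; 1; 5; 6; 1]]); (1, [:: [:: 7; 3; 3; 5; 2]]); (1, [:: [:: 7; 3; 3; 6; 1]]); (1, [:: [:: 7; 3; 4; 5; 1]]); (2, [:: [:: 7; 2; 3; 5; 2]]); (2, [:: [:: 7; 2; 3; 6; 1]])], [:: [:: 8; 1; 5; 6; 1]; [:: 8; 2; 4; 5; 2]; [:: 8; 2; 4; 6; 1]; [:: 8; 1; 3; 5; 4]; [:: 8; 1; 5; 5; 2]; [:: 8; 3; 3; 5; 2]; [:: 7; 2; 3; 8; 1]; [:: 9; 2; 3; 6; 1]; [:: 7; 4; 4; 5; 1]; [:: 8; 3; 3; 6; 1]; [:: 9; 2;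 3; 5; 2]; [:: 7; 1; 4; 5; 4]; [:: 8; 3; 4; 5; 1]]));
  ([:: 1; 7; 6; 6; 1], ([:: [:: 1; 7; 5; 6; 2]; [:: 1; 7; 6; 5; 2]], [:: (1, [:: [:: 1; 7; 5; 5; 2]]); (1, [:: [:: 1; 7; 5; 6; 1]]); (1, [:: [:: 1; 7; 6; 5; 1]]); (2, [:: [:: 1; 7; 5; 5; 1]]); (2, [:: [:: 1; 9; 3; 5; 1]])], [:: [:: 1; 9; 3; 6; 2]; [:: 1; 10; 3; 6; 1]; [:: 1; 10; 4; 5; 1]; [:: 2; 9; 3; 5; 2]; [:: 2; 10; 3; 5; 1]; [:: 1; 9; 4; 5; 2]; [:: 2; 8; 5; 5; 1]; [:: 2; 9; 3; 6; 1]; [:: 1; 9; 4; 6; 1]; [:: 2; 9; 4; 5; 1]; [:: 1; 10; 3; 5; 2]]));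
  ([:: 1; 6; 7; 6; 1], ([:: [:: 1; 6; 7; 5; 2]; [:: 1; 5; 7; 6; 2]], [:: (1, [:: [:: 1; 5; 7; 5; 2]]); (1, [:: [:: 1; 5; 7; 6; 1]]); (1, [:: [:: 1; 6; 7; 5; 1]]); (2, [:: [:: 1; 3; 9; 5; 1]]); (2, [:: [:: 1; 5; 7; 5; 1]])], [:: [:: 1; 3; 10; 6; 1]; [:: 1; 4; 10; 5; 1]; [:: 2; 3; 9; 6; 1]; [:: 1; 4; 9; 6; 1]; [:: 2; 5; 8; 5; 1]; [:: 1; 3; 10; 5; 2]; [:: 1; 3; 9; 6; 2]; [:: 1; 4; 9; 5; 2]; [:: 2; 3; 10; 5; 1]; [:: 2; 4; 9; 5; 1]; [:: 2; 3; 9; 5; 2]]));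
  ([:: 1; 6; 6; 7; 1], ([:: [:: 1; 6; 5; 7; 2]; [:: 1; 5; 6; 7; 2]], [:: (1, [:: [:: 1; 5; 5; 7; 2]]); (1, [:: [:: 1; 5; 6; 7; 1]]); (1, [:: [:: 1; 6; 5; 7; 1]]); (2, [:: [:: 1; 3; 5; 9; 1]]); (2, [:: [:: 1; 5; 5; 7; 1]])], [:: [:: 2; 3; 6; 9; 1]; [:: 1; 3; 5; 10; 2]; [:: 2; 3; 5; 9; 2]; [:: 1; 4; 5; 10; 1]; [:: 1; 3; 6; 10; 1]; [:: 1; 4; 5; 9; 2]; [:: 1; 4; 6; 9; 1]; [:: 2; 4; 5; 9; 1]; [:: 2; 5; 5; 8; 1]; [:: 1; 3; 6; 9; 2]; [:: 2; 3; 5; 10; 1]]));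
  ([:: 1; 6; 6; 1; 7], ([:: [:: 1; 6; 5; 2; 7]; [:: 1; 5; 6; 2; 7]], [:: (1, [:: [:: 1; 5; 5; 2; 7]]); (1, [:: [:: 1; 5; 6; 1; 7]]); (1, [:: [:: 1; 6; 5; 1; 7]]); (2, [:: [:: 1; 3; 5; 1; 9]]); (2, [:: [:: 1; 5; 5; 1; 7]])], [:: [:: 2; 3; 5; 2; 9]; [:: 1; 3; 6; 1; 10]; [:: 2; 3; 5; 1; 10]; [:: 2; 5; 5; 1; 8]; [:: 1; 4; 5; 1; 10]; [:: 1; 3; 6; 2; 9]; [:: 1; 4; 6; 1; 9]; [:: 1; 4; 5; 2; 9]; [:: 1; 3; 5; 2; 10]; [:: 2; 3; 6; 1; 9]; [:: 2; 4; 5; 1; 9]]));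
  ([:: 7; 1; 2; 6; 5], ([:: [:: 7; 1; 2; 5; 6]; [:: 7; 1; 1; 6; 6]], [:: (1, [:: [:: 7; 1; 1; 5; 6]]); (1, [:: [:: 7; 1; 2; 5; 5]]); (1, [:: [:: 7; 1; 4; 3; 5]]); (1, [:: [:: 7; 3; 1; 3; 6]]); (1, [:: [:: 7; 3; 1; 4; 5]]); (1, [:: [:: 7; 3; 2; 3; 5]]); (2, [:: [:: 7; 1; 2; 3; 6]]); (2, [:: [:: 7; 2; 1; 3; 6]]); (2, [:: [:: 7; 2; 2; 3; 5]])], [:: [:: 7; 2; 2; 4; 6]; [:: 8; 2; 2; 4; 5]; [:: 7; 2; 1; 3; 8]; [:: 7; 1; 4; 4; 5]; [:: 8; 2; 1; 4; 6]; [:: 8; 2; 2; 3; 6]; [:: 8; 3; 2; 3; 5]; [:: 7; 1; 2; 3; 8]; [:: 8; 1; 1; 5; 6]; [:: 9; 2; 1; 3; 6]; [:: 8; 1; 4; 3; 5]; [:: 7; 4; 1; 4; 5]; [:: 8; 3; 1; 4; 5]; [:: 8; 1; 2; 4; 6]; [:: 9; 1; 2; 3; 6]; [:: 8; 1; 2; 5; 5]; [:: 8; 3; 1; 3; 6]; [:: 9; 2; 2; 3; 5]]));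
  ([:: 1; 7; 2; 6; 5], ([:: [:: 1; 7; 1; 6; 6]; [:: 1; 7; 2; 5; 6]], [:: (1, [:: [:: 1; 7; 1; 5; 6]]); (1, [:: [:: 1; 7; 1; 6; 5]]); (1, [:: [:: 1; 7; 2; 5; 5]]); (2, [:: [:: 1; 7; 1; 5; 5]]); (2, [:: [:: 1; 9; 1; 3; 5]])], [:: [:: 2; 9; 1; 4; 5]; [:: 1; 10; 1; 3; 6]; [:: 2; 8; 1; 5; 5]; [:: 1; 9; 1; 4; 6]; [:: 2; 9; 2; 3; 5]; [:: 1; 10; 1; 4; 5]; [:: 2; 10; 1; 3; 5]; [:: 2; 9; 1; 3; 6]; [:: 1; 10; 2; 3; 5]; [:: 1; 9; 2; 3; 6]; [:: 1; 9; 2; 4; 5]]));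
  ([:: 1; 2; 7; 6; 5], ([:: [:: 1; 1; 7; 6; 6]; [:: 1; 2; 7; 5; 6]], [:: (1, [:: [:: 1; 1; 7; 5; 6]]); (1, [:: [:: 1; 1; 7; 6; 5]]); (1, [:: [:: 1; 2; 7; 5; 5]]); (2, [:: [:: 1; 1; 7; 5; 5]]); (2, [:: [:: 1; 1; 9; 3; 5]])], [:: [:: 1; 2; 9; 4; 5]; [:: 2; 1; 9; 3; 6]; [:: 2; 2; 9; 3; 5]; [:: 1; 1; 10; 4; 5]; [:: 1; 2; 10; 3; 5]; [:: 2; 1; 9; 4; 5]; [:: 1; 2; 9; 3; 6]; [:: 1; 1; 9; 4; 6]; [:: 2; 1; 10; 3; 5]; [:: 2; 1; 8; 5; 5]; [:: 1; 1; 10; 3; 6]]));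
  ([:: 1; 2; 6; 7; 5], ([:: [:: 1; 2; 5; 7; 6]; [:: 1; 1; 6; 7; 6]], [:: (1, [:: [:: 1; 1; 5; 7; 6]]); (1, [:: [:: 1; 1; 6; 7; 5]]); (1, [:: [:: 1; 2; 5; 7; 5]]); (2, [:: [:: 1; 1; 3; 9; 5]]); (2, [:: [:: 1; 1; 5; 7; 5]])], [:: [:: 2; 1; 3; 10; 5]; [:: 2; 1; 5; 8; 5]; [:: 2; 2; 3; 9; 5]; [:: 1; 2; 4; 9; 5]; [:: 1; 1; 4; 9; 6]; [:: 1; 1; 4; 10; 5]; [:: 1; 2; 3; 9; 6]; [:: 2; 1; 4; 9; 5]; [:: 2; 1; 3; 9; 6]; [:: 1; 1; 3; 10; 6]; [:: 1; 2; 3; 10; 5]]));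
  ([:: 1; 2; 6; 5; 7], ([:: [:: 1; 2; 5; 6; 7]; [:: 1; 1; 6; 6; 7]], [:: (1, [:: [:: 1; 1; 5; 6; 7]]); (1, [:: [:: 1; 1; 6; 5; 7]]); (1, [:: [:: 1; 2; 5; 5; 7]]); (2, [:: [:: 1; 1; 3; 5; 9]]); (2, [:: [:: 1; 1; 5; 5; 7]])], [:: [:: 1; 2; 4; 5; 9]; [:: 1; 1; 4; 5; 10]; [:: 1; 1; 4; 6; 9]; [:: 2; 1; 4; 5; 9]; [:: 2; 2; 3; 5; 9]; [:: 1; 2; 3; 5; 10]; [:: 1; 2; 3; 6; 9]; [:: 2; 1; 3; 5; 10]; [:: 1; 1; 3; 6; 10]; [:: 2; 1; 3; 6; 9]; [:: 2; 1; 5; 5; 8]]));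
  ([:: 7; 1; 6; 2; 5], ([:: [:: 7; 1; 6; 1; 6]; [:: 7; 1; 3; 4; 6]], [:: (1, [:: [:: 7; 1; 3; 4; 5]]); (1, [:: [:: 7; 1; 5; 1; 6]]); (1, [:: [:: 7; 1; 5; 2; 5]]); (1, [:: [:: 7; 3; 3; 1; 6]]); (1, [:: [:: 7; 3; 3; 2; 5]]); (1, [:: [:: 7; 3; 4; 1; 5]]); (2, [:: [:: 7; 2; 3; 1; 6]]); (2, [:: [:: 7; 2; 3; 2; 5]])], [:: [:: 8; 1; 5; 1; 6]; [:: 8; 1; 3; 4; 5]; [:: 8; 3; 3; 1; 6]; [:: 8; 3; 3; 2; 5]; [:: 9; 2; 3; 2; 5]; [:: 8; 3; 4; 1; 5]; [:: 7; 2; 3; 1; 8]; [:: 8; 2; 4; 2; 5]; [:: 9; 2; 3; 1; 6]; [:: 8; 2; 4; 1; 6]; [:: 7; 1; 4; 4; 5]; [:: 8; 1; 5; 2; 5]; [:: 7; 4; 4; 1; 5]]));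
  ([:: 1; 7; 6; 2; 5], ([:: [:: 1; 7; 6; 1; 6]; [:: 1; 7; 5; 2; 6]], [:: (1, [:: [:: 1; 7; 5; 1; 6]]); (1, [:: [:: 1; 7; 5; 2; 5]]); (1, [:: [:: 1; 7; 6; 1; 5]]); (2, [:: [:: 1; 7; 5; 1; 5]]); (2, [:: [:: 1; 9; 3; 1; 5]])], [:: [:: 2; 10; 3; 1; 5]; [:: 1; 10; 3; 2; 5]; [:: 1; 9; 4; 1; 6]; [:: 2; 9; 4; 1; 5]; [:: 2; 9; 3; 1; 6]; [:: 1; 10; 4; 1; 5]; [:: 2; 8; 5; 1; 5]; [:: 1; 10; 3; 1; 6]; [:: 1; 9; 4; 2; 5]; [:: 1; 9; 3; 2; 6]; [:: 2; 9; 3; 2; 5]]));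
  ([:: 1; 6; 7; 2; 5], ([:: [:: 1; 6; 7; 1; 6]; [:: 1; 5; 7; 2; 6]], [:: (1, [:: [:: 1; 5; 7; 1; 6]]); (1, [:: [:: 1; 5; 7; 2; 5]]); (1, [:: [:: 1; 6; 7; 1; 5]]); (2, [:: [:: 1; 3; 9; 1; 5]]); (2, [:: [:: 1; 5; 7; 1; 5]])], [:: [:: 1; 3; 10; 2; 5]; [:: 1; 3; 9; 2; 6]; [:: 1; 3; 10; 1; 6]; [:: 1; 4; 9; 2; 5]; [:: 2; 3; 10; 1; 5]; [:: 2; 4; 9; 1; 5]; [:: 1; 4; 10; 1; 5]; [:: 2; 3; 9; 1; 6]; [:: 2; 3; 9; 2; 5]; [:: 1; 4; 9; 1; 6]; [:: 2; 5; 8; 1; 5]]));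
  ([:: 1; 6; 2; 7; 5], ([:: [:: 1; 6; 1; 7; 6]; [:: 1; 5; 2; 7; 6]], [:: (1, [:: [:: 1; 5; 1; 7; 6]]); (1, [:: [:: 1; 5; 2; 7; 5]]); (1, [:: [:: 1; 6; 1; 7; 5]]); (2, [:: [:: 1; 3; 1; 9; 5]]); (2, [:: [:: 1; 5; 1; 7; 5]])], [:: [:: 2; 4; 1; 9; 5]; [:: 1; 3; 2; 10; 5]; [:: 1; 4; 1; 10; 5]; [:: 1; 4; 2; 9; 5]; [:: 2; 3; 1; 10; 5]; [:: 1; 3; 2; 9; 6]; [:: 2; 5; 1; 8; 5]; [:: 1; 3; 1; 10; 6]; [:: 2; 3; 2; 9; 5]; [:: 1; 4; 1; 9; 6]; [:: 2; 3; 1; 9; 6]]));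
  ([:: 1; 6; 2; 5; 7], ([:: [:: 1; 5; 2; 6; 7]; [:: 1; 6; 1; 6; 7]], [:: (1, [:: [:: 1; 5; 1; 6; 7]]); (1, [:: [:: 1; 5; 2; 5; 7]]); (1, [:: [:: 1; 6; 1; 5; 7]]); (2, [:: [:: 1; 3; 1; 5; 9]]); (2, [:: [:: 1; 5; 1; 5; 7]])], [:: [:: 1; 3; 2; 6; 9]; [:: 2; 3; 1; 6; 9]; [:: 2; 3; 2; 5; 9]; [:: 1; 3; 1; 6; 10]; [:: 2; 3; 1; 5; 10]; [:: 1; 3; 2; 5; 10]; [:: 1; 4; 1; 5; 10]; [:: 1; 4; 1; 6; 9]; [:: 2; 4; 1; 5; 9]; [:: 1; 4; 2; 5; 9]; [:: 2; 5; 1; 5; 8]]));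
  ([:: 7; 1; 6; 3; 4], ([:: [:: 7; 1; 4; 6; 3]; [:: 7; 1; 3; 6; 4]; [:: 7; 1; 3; 4; 6]; [:: 7; 1; 6; 2; 5]; [:: 7; 1; 4; 3; 6]], [:: (1, [:: [:: 7; 1; 3; 4; 5]]); (1, [:: [:: 7; 1; 3; 5; 4]]); (1, [:: [:: 7; 1; 4; 3; 5]]); (1, [:: [:: 7; 1; 4; 5; 3]]); (1, [:: [:: 7; 1; 5; 3; 4]]); (1, [:: [:: 7; 1; 5; 4; 3]]); (1, [:: [:: 7; 3; 3; 3; 4]]); (1, [:: [:: 7; 3; 3; 4; 3]]); (1, [:: [:: 7; 3; 4; 3; 3]]); (2, [:: [:: 7; 1; 6; 2; 3]]); (2, [:: [:: 7; 2; 3; 3; 4]]); (2, [:: [:: 7; 2; 3; 4; 3]]); (2, [:: [:: 7; 2; 4; 3; 3]])], [:: [:: 9; 1; 6; 2; 3]; [:: 8; 1; 4; 5; 3]; [:: 8; 3; 3; 3; 4]; [:: 8; 3; 3; 4; 3]; [:: 8; 1; 3; 4; 5]; [:: 8; 1; 3; 5; 4]; [:: 8; 1; 5; 4; 3]; [:: 8; 1; 6; 2; 4]; [:: 7; 2; 6; 2; 4]; [:: 9; 2; 3; 3; 4]; [:: 9; 2; 3; 4; 3]; [:: 8; 2; 6; 2; 3]; [:: 7; 2; 4; 4; 4]; [:: 9; 2; 4; 3; 3]; [:: 8; 1; 5; 3; 4]; [:: 8; 1; 4; 3; 5]; [:: 7; 1; 8; 2; 3]; [:: 8; 3; 4; 3;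 3]]));
  ([:: 1; 7; 6; 3; 4], ([:: [:: 1; 7; 6; 2; 5]; [:: 1; 7; 3; 4; 6]; [:: 1; 7; 4; 6; 3]; [:: 1; 7; 4; 3; 6]; [:: 1; 7; 3; 6; 4]], [:: (1, [:: [:: 1; 7; 3; 3; 6]]); (1, [:: [:: 1; 7; 3; 4; 5]]); (1, [:: [:: 1; 7; 3; 5; 4]]); (1, [:: [:: 1; 7; 3; 6; 3]]); (1, [:: [:: 1; 7; 4; 3; 5]]); (1, [:: [:: 1; 7; 4; 5; 3]]); (1, [:: [:: 1; 7; 5; 3; 4]]); (1, [:: [:: 1; 7; 5; 4; 3]]); (1, [:: [:: 1; 7; 6; 3; 3]]); (1, [:: [:: 1; 10; 3; 3; 3]]); (2, [:: [:: 1; 7; 3; 3; 5]]); (2, [:: [:: 1; 7; 3; 5; 3]]); (2, [:: [:: 1; 7; 5; 3; 3]]); (2, [:: [:: 1; 7; 6; 2; 3]]); (2, [:: [:: 1; 9; 3; 3; 3]])], [:: [:: 2; 9; 3; 4; 3]; [:: 2; 8; 3; 3; 5]; [:: 1; 8; 6; 2; 4]; [:: 2; 9; 3; 3; 4]; [:: 1; 9; 6; 2; 3]; [:: 2; 9; 4; 3; 3]; [:: 1; 7; 4; 5; 4]; [:: 2; 8; 5; 3; 3]; [:: 1; 7; 4; 4; 5]; [:: 1; 7; 5; 4; 4]; [:: 2; 8; 6; 2; 3]; [:: 1; 9; 4; 3; 4]; [:: 1; 9; 4; 4; 3]; [:: 2; 7; 6; 2; 4]; [:: 2; 8; 3; 5;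 3]; [:: 1; 9; 3; 4; 4]; [:: 1; 7; 8; 2; 3]]));
  ([:: 1; 6; 7; 3; 4], ([:: [:: 1; 4; 7; 6; 3]; [:: 1; 4; 7; 3; 6]; [:: 1; 3; 7; 6; 4]; [:: 1; 6; 7; 2; 5]; [:: 1; 3; 7; 4; 6]], [:: (1, [:: [:: 1; 3; 7; 3; 6]]); (1, [:: [:: 1; 3; 7; 4; 5]]); (1, [:: [:: 1; 3; 7; 5; 4]]); (1, [:: [:: 1; 3; 7; 6; 3]]); (1, [:: [:: 1; 3; 10; 3; 3]]); (1, [:: [:: 1; 4; 7; 3; 5]]); (1, [:: [:: 1; 4; 7; 5; 3]]); (1, [:: [:: 1; 5; 7; 3; 4]]); (1, [:: [:: 1; 5; 7; 4; 3]]); (1, [:: [:: 1; 6; 7; 3; 3]]); (2, [:: [:: 1; 3; 7; 3; 5]]); (2, [:: [:: 1; 3; 7; 5; 3]]); (2, [:: [:: 1; 3; 9; 3; 3]]); (2, [:: [:: 1; 5; 7; 3; 3]]); (2, [:: [:: 1; 6; 7; 2; 3]])], [:: [:: 1; 5; 7; 4; 4]; [:: 2; 4; 9; 3; 3]; [:: 2; 3; 8; 3; 5]; [:: 1; 8; 7; 2; 3]; [:: 2; 6; 7; 2; 4]; [:: 1; 6; 9; 2; 3]; [:: 2; 5; 8; 3; 3]; [:: 2; 6; 8; 2; 3]; [:: 1; 4; 7; 5; 4]; [:: 2; 3; 9; 4; 3]; [:: 1; 4; 7; 4; 5]; [:: 2; 3; 9; 3; 4]; [:: 1; 3; 9; 4;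 4]; [:: 1; 4; 9; 4; 3]; [:: 1; 4; 9; 3; 4]; [:: 1; 6; 8; 2; 4]; [:: 2; 3; 8; 5; 3]]));
  ([:: 1; 6; 3; 7; 4], ([:: [:: 1; 3; 4; 7; 6]; [:: 1; 3; 6; 7; 4]; [:: 1; 4; 6; 7; 3]; [:: 1; 6; 2; 7; 5]; [:: 1; 4; 3; 7; 6]], [:: (1, [:: [:: 1; 3; 3; 7; 6]]); (1, [:: [:: 1; 3; 3; 10; 3]]); (1, [:: [:: 1; 3; 4; 7; 5]]); (1, [:: [:: 1; 3; 5; 7; 4]]); (1, [:: [:: 1; 3; 6; 7; 3]]); (1, [:: [:: 1; 4; 3; 7; 5]]); (1, [:: [:: 1; 4; 5; 7; 3]]); (1, [:: [:: 1; 5; 3; 7; 4]]); (1, [:: [:: 1; 5; 4; 7; 3]]); (1, [:: [:: 1; 6; 3; 7; 3]]); (2, [:: [:: 1; 3; 3; 7; 5]]); (2, [:: [:: 1; 3; 3; 9; 3]]); (2, [:: [:: 1; 3; 5; 7; 3]]); (2, [:: [:: 1; 5; 3; 7; 3]]); (2, [:: [:: 1; 6; 2; 7; 3]])], [:: [:: 1; 4; 4; 9; 3]; [:: 1; 4; 5; 7; 4]; [:: 1; 4; 4; 7; 5]; [:: 2; 3; 3; 9; 4]; [:: 2; 4; 3; 9; 3]; [:: 1; 6; 2; 9; 3]; [:: 2; 3; 3; 8; 5]; [:: 1; 5; 4; 7; 4]; [:: 1; 8; 2; 7; 3]; [:: 2; 5; 3; 8; 3]; [:: 1; 6; 2; 8;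 4]; [:: 2; 3; 4; 9; 3]; [:: 1; 4; 3; 9; 4]; [:: 2; 3; 5; 8; 3]; [:: 1; 3; 4; 9; 4]; [:: 2; 6; 2; 7; 4]; [:: 2; 6; 2; 8; 3]]));
  ([:: 1; 6; 3; 4; 7], ([:: [:: 1; 4; 6; 3; 7]; [:: 1; 4; 3; 6; 7]; [:: 1; 3; 4; 6; 7]; [:: 1; 3; 6; 4; 7]; [:: 1; 6; 2; 5; 7]], [:: (1, [:: [:: 1; 3; 3; 3; 10]]); (1, [:: [:: 1; 3; 3; 6; 7]]); (1, [:: [:: 1; 3; 4; 5; 7]]); (1, [:: [:: 1; 3; 5; 4; 7]]); (1, [:: [:: 1; 3; 6; 3; 7]]); (1, [:: [:: 1; 4; 3; 5; 7]]); (1, [:: [:: 1; 4; 5; 3; 7]]); (1, [:: [:: 1; 5; 3; 4; 7]]); (1, [:: [:: 1; 5; 4; 3; 7]]); (1, [:: [:: 1; 6; 3; 3; 7]]); (2, [:: [:: 1; 3; 3; 3; 9]]); (2, [:: [:: 1; 3; 3; 5; 7]]); (2, [:: [:: 1; 3; 5; 3; 7]]); (2, [:: [:: 1; 5; 3; 3; 7]]); (2, [:: [:: 1; 6; 2; 3; 7]])], [:: [:: 1; 6; 2; 4; 8]; [:: 1; 8; 2; 3; 7]; [:: 2; 4; 3; 3; 9]; [:: 2; 5; 3; 3; 8]; [:: 1; 4; 3; 4; 9]; [:: 2; 3; 4; 3; 9]; [:: 1; 6; 2; 3; 9]; [:: 2; 6; 2; 4; 7]; [:: 2; 3; 5; 3;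 8]; [:: 1; 3; 4; 4; 9]; [:: 2; 6; 2; 3; 8]; [:: 1; 4; 4; 5; 7]; [:: 1; 4; 5; 4; 7]; [:: 1; 4; 4; 3; 9]; [:: 1; 5; 4; 4; 7]; [:: 2; 3; 3; 5; 8]; [:: 2; 3; 3; 4; 9]]));
  ([:: 7; 3; 4; 1; 6], ([:: [:: 7; 3; 3; 4; 4]; [:: 7; 2; 5; 4; 3]; [:: 7; 3; 1; 4; 6]; [:: 7; 2; 3; 4; 5]], [:: (1, [:: [:: 7; 3; 3; 4; 3]]); (1, [:: [:: 7; 3; 4; 1; 5]]); (1, [:: [:: 7; 5; 1; 2; 5]]); (1, [:: [:: 7; 5; 1; 4; 3]]); (2, [:: [:: 7; 2; 3; 4; 3]]); (2, [:: [:: 7; 3; 1; 2; 6]]); (2, [:: [:: 7; 3; 2; 2; 5]]); (2, [:: [:: 7; 3; 2; 4; 3]]); (2, [:: [:: 7; 6; 1; 2; 3]])], [:: [:: 8; 5; 1; 4; 3]; [:: 8; 2; 3; 4; 4]; [:: 8; 4; 2; 2; 5]; [:: 8; 4; 1; 2; 6]; [:: 7; 6; 2; 2; 4]; [:: 7; 4; 2; 4; 4]; [:: 8; 3; 3; 4; 3]; [:: 8; 5; 1; 2; 5]; [:: 8; 3; 2; 4; 4]; [:: 7; 5; 1; 4; 4]; [:: 9; 2; 3; 4; 3]; [:: 7; 3; 1; 2; 8]; [:: 7; 2; 4; 4; 4]; [:: 8; 2; 4; 4; 3]; [:: 9; 3; 2; 4; 3]; [:: 7; 4; 4; 1; 5];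 [:: 7; 8; 1; 2; 3]; [:: 9; 6; 1; 2; 3]; [:: 9; 3; 1; 2; 6]; [:: 9; 3; 2; 2; 5]; [:: 8; 6; 2; 2; 3]; [:: 8; 4; 2; 4; 3]; [:: 8; 6; 1; 2; 4]; [:: 8; 3; 4; 1; 5]]));
  ([:: 3; 7; 4; 1; 6], ([:: [:: 2; 7; 5; 4; 3]; [:: 3; 7; 1; 4; 6]; [:: 2; 7; 3; 4; 5]; [:: 3; 7; 3; 4; 4]], [:: (1, [:: [:: 3; 7; 3; 4; 3]]); (1, [:: [:: 3; 7; 4; 1; 5]]); (1, [:: [:: 5; 7; 1; 2; 5]]); (1, [:: [:: 5; 7; 1; 4; 3]]); (2, [:: [:: 2; 7; 3; 4; 3]]); (2, [:: [:: 3; 7; 1; 2; 6]]); (2, [:: [:: 3; 7; 2; 2; 5]]); (2, [:: [:: 3; 7; 2; 4; 3]]); (2, [:: [:: 6; 7; 1; 2; 3]])], [:: [:: 2; 8; 3; 4; 4]; [:: 2; 9; 3; 4; 3]; [:: 3; 9; 2; 2; 5]; [:: 2; 7; 4; 4; 4]; [:: 8; 7; 1; 2; 3]; [:: 5; 8; 1; 2; 5]; [:: 3; 8; 3; 4; 3]; [:: 6; 8; 2; 2; 3]; [:: 3; 9; 1; 2; 6]; [:: 2; 8; 4; 4; 3]; [:: 6; 8; 1; 2; 4]; [:: 4; 7; 4; 1; 5]; [:: 3; 8; 4; 1; 5]; [:: 4; 7; 2; 4; 4]; [:: 4; 8; 2; 4; 3]; [:: 6; 7; 2; 2; 4]; [::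 4; 8; 2; 2; 5]; [:: 4; 8; 1; 2; 6]; [:: 5; 7; 1; 4; 4]; [:: 3; 8; 2; 4; 4]; [:: 3; 7; 1; 2; 8]; [:: 3; 9; 2; 4; 3]; [:: 5; 8; 1; 4; 3]; [:: 6; 9; 1; 2; 3]]));
  ([:: 3; 4; 7; 1; 6], ([:: [:: 2; 3; 7; 4; 5]; [:: 2; 5; 7; 4; 3]; [:: 3; 1; 7; 4; 6]; [:: 3; 3; 7; 4; 4]], [:: (1, [:: [:: 3; 3; 7; 4; 3]]); (1, [:: [:: 3; 4; 7; 1; 5]]); (1, [:: [:: 5; 1; 7; 2; 5]]); (1, [:: [:: 5; 1; 7; 4; 3]]); (2, [:: [:: 2; 3; 7; 4; 3]]); (2, [:: [:: 3; 1; 7; 2; 6]]); (2, [:: [:: 3; 2; 7; 2; 5]]); (2, [:: [:: 3; 2; 7; 4; 3]]); (2, [:: [:: 6; 1; 7; 2; 3]])], [:: [:: 3; 4; 8; 1; 5]; [:: 6; 2; 8; 2; 3]; [:: 2; 4; 8; 4; 3]; [:: 6; 2; 7; 2; 4]; [:: 4; 2; 8; 2; 5]; [:: 2; 3; 8; 4; 4]; [:: 2; 4; 7; 4; 4]; [:: 3; 3; 8; 4; 3]; [:: 6; 1; 9; 2; 3]; [:: 3; 1; 7; 2; 8]; [:: 2; 3; 9; 4; 3]; [:: 4; 1; 8; 2; 6]; [:: 8; 1; 7; 2; 3]; [:: 5; 1; 8; 4; 3]; [:: 3; 2; 8; 4; 4]; [:: 5; 1; 7; 4; 4]; [:: 6;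 1; 8; 2; 4]; [:: 3; 1; 9; 2; 6]; [:: 5; 1; 8; 2; 5]; [:: 4; 2; 8; 4; 3]; [:: 3; 2; 9; 4; 3]; [:: 4; 2; 7; 4; 4]; [:: 4; 4; 7; 1; 5]; [:: 3; 2; 9; 2; 5]]));
  ([:: 3; 4; 1; 7; 6], ([:: [:: 3; 3; 4; 7; 4]; [:: 2; 5; 4; 7; 3]; [:: 2; 3; 4; 7; 5]; [:: 3; 1; 4; 7; 6]], [:: (1, [:: [:: 3; 3; 4; 7; 3]]); (1, [:: [:: 3; 4; 1; 7; 5]]); (1, [:: [:: 5; 1; 2; 7; 5]]); (1, [:: [:: 5; 1; 4; 7; 3]]); (2, [:: [:: 2; 3; 4; 7; 3]]); (2, [:: [:: 3; 1; 2; 7; 6]]); (2, [:: [:: 3; 2; 2; 7; 5]]); (2, [:: [:: 3; 2; 4; 7; 3]]); (2, [:: [:: 6; 1; 2; 7; 3]])], [:: [:: 5; 1; 4; 7; 4]; [:: 4; 4; 1; 7; 5]; [:: 4; 2; 2; 8; 5]; [:: 6; 1; 2; 8; 4]; [:: 3; 4; 1; 8; 5]; [:: 3; 2; 2; 9; 5]; [:: 3; 1; 2; 9; 6]; [:: 3; 3; 4; 8; 3]; [:: 2; 4; 4; 8; 3]; [:: 3; 1; 2; 7; 8]; [:: 5; 1; 2; 8; 5]; [:: 4; 2; 4; 8; 3]; [:: 4; 2; 4; 7; 4]; [:: 2; 3; 4; 9; 3]; [:: 2; 3; 4; 8; 4]; [:: 8; 1; 2; 7; 3]; [:: 3; 2;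 4; 9; 3]; [:: 2; 4; 4; 7; 4]; [:: 6; 2; 2; 8; 3]; [:: 5; 1; 4; 8; 3]; [:: 3; 2; 4; 8; 4]; [:: 6; 1; 2; 9; 3]; [:: 6; 2; 2; 7; 4]; [:: 4; 1; 2; 8; 6]]));
  ([:: 3; 4; 1; 6; 7], ([:: [:: 3; 3; 4; 4; 7]; [:: 2; 5; 4; 3; 7]; [:: 2; 3; 4; 5; 7]; [:: 3; 1; 4; 6; 7]], [:: (1, [:: [:: 3; 3; 4; 3; 7]]); (1, [:: [:: 3; 4; 1; 5; 7]]); (1, [:: [:: 5; 1; 2; 5; 7]]); (1, [:: [:: 5; 1; 4; 3; 7]]); (2, [:: [:: 2; 3; 4; 3; 7]]); (2, [:: [:: 3; 1; 2; 6; 7]]); (2, [:: [:: 3; 2; 2; 5; 7]]); (2, [:: [:: 3; 2; 4; 3; 7]]); (2, [:: [:: 6; 1; 2; 3; 7]])], [:: [:: 3; 3; 4; 3; 8]; [:: 4; 2; 4; 4; 7]; [:: 2; 3; 4; 4; 8]; [:: 4; 2; 4; 3; 8]; [:: 8; 1; 2; 3; 7]; [:: 2; 4; 4; 3; 8]; [:: 6; 2; 2; 4; 7]; [:: 5; 1; 4; 4; 7]; [:: 3; 1; 2; 8; 7]; [:: 3; 2; 4; 4; 8]; [:: 2; 3; 4; 3; 9]; [:: 4; 4; 1; 5; 7]; [:: 6; 2; 2; 3; 8]; [:: 5; 1; 4; 3; 8]; [:: 4; 1; 2; 6; 8]; [:: 3; 2; 4; 3; 9]; [:: 6; 1; 2;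 4; 8]; [:: 4; 2; 2; 5; 8]; [:: 3; 1; 2; 6; 9]; [:: 3; 4; 1; 5; 8]; [:: 6; 1; 2; 3; 9]; [:: 3; 2; 2; 5; 9]; [:: 2; 4; 4; 4; 7]; [:: 5; 1; 2; 5; 8]]));
  ([:: 7; 3; 4; 5; 2], ([:: [:: 7; 3; 4; 3; 4]; [:: 7; 3; 1; 6; 4]], [:: (1, [:: [:: 7; 5; 1; 3; 4]]); (1, [:: [:: 7; 5; 1; 5; 2]]); (2, [:: [:: 7; 3; 1; 6; 2]]); (2, [:: [:: 7; 3; 2; 3; 4]]); (2, [:: [:: 7; 3; 2; 5; 2]]); (2, [:: [:: 7; 6; 1; 3; 2]])], [:: [:: 8; 5; 1; 3; 4]; [:: 8; 4; 2; 3; 4]; [:: 7; 4; 2; 4; 4]; [:: 9; 3; 1; 6; 2]; [:: 8; 3; 2; 4; 4]; [:: 7; 5; 1; 4; 4]; [:: 9; 3; 2; 5; 2]; [:: 7; 8; 1; 3; 2]; [:: 9; 3; 2; 3; 4]; [:: 8; 6; 1; 4; 2]; [:: 9; 6; 1; 3; 2]; [:: 8; 4; 1; 6; 2]; [:: 7; 3; 1; 8; 2]; [:: 8; 4; 2; 5; 2]; [:: 8; 5; 1; 5; 2]; [:: 8; 6; 2; 3; 2]; [:: 7; 6; 2; 4; 2]]));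
  ([:: 3; 7; 4; 5; 2], ([:: [:: 3; 7; 4; 3; 4]; [:: 3; 7; 1; 6; 4]], [:: (1, [:: [:: 5; 7; 1; 3; 4]]); (1, [:: [:: 5; 7; 1; 5; 2]]); (2, [:: [:: 3; 7; 1; 6; 2]]); (2, [:: [:: 3; 7; 2; 3; 4]]); (2, [:: [:: 3; 7; 2; 5; 2]]); (2, [:: [:: 6; 7; 1; 3; 2]])], [:: [:: 6; 8; 2; 3; 2]; [:: 3; 9; 2; 3; 4]; [:: 5; 8; 1; 3; 4]; [:: 3; 7; 1; 8; 2]; [:: 4; 8; 2; 5; 2]; [:: 4; 8; 1; 6; 2]; [:: 6; 7; 2; 4; 2]; [:: 4; 7; 2; 4; 4]; [:: 3; 9; 1; 6; 2]; [:: 4; 8; 2; 3; 4]; [:: 3; 9; 2; 5; 2]; [:: 5; 7; 1; 4; 4]; [:: 5; 8; 1; 5; 2]; [:: 3; 8; 2; 4; 4]; [:: 8; 7; 1; 3; 2]; [:: 6; 9; 1; 3; 2]; [:: 6; 8; 1; 4; 2]]));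
  ([:: 3; 4; 7; 5; 2], ([:: [:: 3; 1; 7; 6; 4]; [:: 3; 4; 7; 3; 4]], [:: (1, [:: [:: 5; 1; 7; 3; 4]]); (1, [:: [:: 5; 1; 7; 5; 2]]); (2, [:: [:: 3; 1; 7; 6; 2]]); (2, [:: [:: 3; 2; 7; 3; 4]]); (2, [:: [:: 3; 2; 7; 5; 2]]); (2, [:: [:: 6; 1; 7; 3; 2]])], [:: [:: 3; 2; 9; 3; 4]; [:: 6; 1; 9; 3; 2]; [:: 8; 1; 7; 3; 2]; [:: 3; 1; 7; 8; 2]; [:: 5; 1; 8; 5; 2]; [:: 3; 2; 8; 4; 4]; [:: 5; 1; 7; 4; 4]; [:: 5; 1; 8; 3; 4]; [:: 6; 1; 8; 4; 2]; [:: 4; 2; 8; 5; 2]; [:: 6; 2; 8; 3; 2]; [:: 3; 2; 9; 5; 2]; [:: 4; 2; 7; 4; 4]; [:: 6; 2; 7; 4; 2]; [:: 4; 1; 8; 6; 2]; [:: 4; 2; 8; 3; 4]; [:: 3; 1; 9; 6; 2]]));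
  ([:: 3; 4; 5; 7; 2], ([:: [:: 3; 1; 6; 7; 4]; [:: 3; 4; 3; 7; 4]], [:: (1, [:: [:: 5; 1; 3; 7; 4]]); (1, [:: [:: 5; 1; 5; 7; 2]]); (2, [:: [:: 3; 1; 6; 7; 2]]); (2, [:: [:: 3; 2; 3; 7; 4]]); (2, [:: [:: 3; 2; 5; 7; 2]]); (2, [:: [:: 6; 1; 3; 7; 2]])], [:: [:: 5; 1; 4; 7; 4]; [:: 3; 2; 5; 9; 2]; [:: 4; 1; 6; 8; 2]; [:: 6; 2; 3; 8; 2]; [:: 4; 2; 3; 8; 4]; [:: 3; 2; 3; 9; 4]; [:: 3; 1; 6; 9; 2]; [:: 4; 2; 5; 8; 2]; [:: 6; 1; 4; 8; 2]; [:: 4; 2; 4; 7; 4]; [:: 5; 1; 5; 8; 2]; [:: 6; 2; 4; 7; 2]; [:: 8; 1; 3; 7; 2]; [:: 3; 2; 4; 8; 4]; [:: 5; 1; 3; 8; 4]; [:: 3; 1; 8; 7; 2]; [:: 6; 1; 3; 9; 2]]));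
  ([:: 3; 4; 5; 2; 7], ([:: [:: 3; 4; 3; 4; 7]; [:: 3; 1; 6; 4; 7]], [:: (1, [:: [:: 5; 1; 3; 4; 7]]); (1, [:: [:: 5; 1; 5; 2; 7]]); (2, [:: [:: 3; 1; 6; 2; 7]]); (2, [:: [:: 3; 2; 3; 4; 7]]); (2, [:: [:: 3; 2; 5; 2; 7]]); (2, [:: [:: 6; 1; 3; 2; 7]])], [:: [:: 3; 2; 5; 2; 9]; [:: 4; 2; 4; 4; 7]; [:: 6; 1; 4; 2; 8]; [:: 5; 1; 4; 4; 7]; [:: 3; 2; 4; 4; 8]; [:: 6; 2; 4; 2; 7]; [:: 3; 1; 6; 2; 9]; [:: 4; 2; 5; 2; 8]; [:: 5; 1; 3; 4; 8]; [:: 5; 1; 5; 2; 8]; [:: 8; 1; 3; 2; 7]; [:: 3; 1; 8; 2; 7]; [:: 4; 2; 3; 4; 8]; [:: 6; 1; 3; 2; 9]; [:: 4; 1; 6; 2; 8]; [:: 3; 2; 3; 4; 9]; [:: 6; 2; 3; 2; 8]]));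
  ([:: 7; 3; 5; 4; 2], ([:: [:: 7; 3; 3; 4; 4]; [:: 7; 3; 5; 2; 4]], [:: (1, [:: [:: 7; 3; 5; 1; 4]]); (1, [:: [:: 7; 5; 3; 1; 4]]); (1, [:: [:: 7; 5; 5; 1; 2]]); (2, [:: [:: 7; 3; 3; 2; 4]]); (2, [:: [:: 7; 3; 5; 2; 2]]); (2, [:: [:: 7; 3; 6; 1; 2]]); (2, [:: [:: 7; 6; 3; 1; 2]])], [:: [:: 9; 6; 3; 1; 2]; [:: 9; 3; 6; 1; 2]; [:: 9; 3; 3; 2; 4]; [:: 7; 4; 4; 2; 4]; [:: 8; 4; 6; 1; 2]; [:: 7; 4; 5; 1; 4]; [:: 7; 8; 3; 1; 2]; [:: 8; 4; 3; 2; 4]; [:: 7; 5; 4; 1; 4]; [:: 9; 3; 5; 2; 2]; [:: 7; 3; 8; 1; 2]; [:: 7; 6; 4; 2; 2]; [:: 8; 5; 3; 1; 4]; [:: 8; 5; 5; 1; 2]; [:: 8; 6; 3; 2; 2]; [:: 8; 3; 4; 2; 4]; [:: 8; 6; 4; 1; 2]; [:: 8; 3; 5; 1; 4]; [:: 8; 4; 5; 2; 2]]));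
  ([:: 3; 7; 5; 4; 2], ([:: [:: 3; 7; 5; 2; 4]; [:: 3; 7; 3; 4; 4]], [:: (1, [:: [:: 3; 7; 5; 1; 4]]); (1, [:: [:: 5; 7; 3; 1; 4]]); (1, [:: [:: 5; 7; 5; 1; 2]]); (2, [:: [:: 3; 7; 3; 2; 4]]); (2, [:: [:: 3; 7; 5; 2; 2]]); (2, [:: [:: 3; 7; 6; 1; 2]]); (2, [:: [:: 6; 7; 3; 1; 2]])], [:: [:: 3; 8; 4; 2; 4]; [:: 3; 9; 6; 1; 2]; [:: 6; 9; 3; 1; 2]; [:: 4; 8; 5; 2; 2]; [:: 5; 8; 5; 1; 2]; [:: 4; 7; 4; 2; 4]; [:: 3; 9; 3; 2; 4]; [:: 6; 7; 4; 2; 2]; [:: 4; 7; 5; 1; 4]; [:: 3; 7; 8; 1; 2]; [:: 5; 8; 3; 1; 4]; [:: 6; 8; 3; 2; 2]; [:: 8; 7; 3; 1; 2]; [:: 6; 8; 4; 1; 2]; [:: 3; 8; 5; 1; 4]; [:: 4; 8; 3; 2; 4]; [:: 5; 7; 4; 1; 4]; [:: 3; 9; 5; 2; 2]; [:: 4; 8; 6; 1; 2]]));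
  ([:: 3; 5; 7; 4; 2], ([:: [:: 3; 5; 7; 2; 4]; [:: 3; 3; 7; 4; 4]], [:: (1, [:: [:: 3; 5; 7; 1; 4]]); (1, [:: [:: 5; 3; 7; 1; 4]]); (1, [:: [:: 5; 5; 7; 1; 2]]); (2, [:: [:: 3; 3; 7; 2; 4]]); (2, [:: [:: 3; 5; 7; 2; 2]]); (2, [:: [:: 3; 6; 7; 1; 2]]); (2, [:: [:: 6; 3; 7; 1; 2]])], [:: [:: 3; 4; 8; 2; 4]; [:: 4; 5; 7; 1; 4]; [:: 5; 3; 8; 1; 4]; [:: 4; 3; 8; 2; 4]; [:: 3; 8; 7; 1; 2]; [:: 4; 5; 8; 2; 2]; [:: 3; 3; 9; 2; 4]; [:: 3; 5; 9; 2; 2]; [:: 4; 6; 8; 1; 2]; [:: 6; 3; 9; 1; 2]; [:: 3; 6; 9; 1; 2]; [:: 8; 3; 7; 1; 2]; [:: 6; 3; 8; 2; 2]; [:: 3; 5; 8; 1; 4]; [:: 4; 4; 7; 2; 4]; [:: 5; 4; 7; 1; 4]; [:: 6; 4; 7; 2; 2]; [:: 6; 4; 8; 1; 2]; [:: 5; 5; 8; 1; 2]]));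
  ([:: 3; 5; 4; 7; 2], ([:: [:: 3; 5; 2; 7; 4]; [:: 3; 3; 4; 7; 4]], [:: (1, [:: [:: 3; 5; 1; 7; 4]]); (1, [:: [:: 5; 3; 1; 7; 4]]); (1, [:: [:: 5; 5; 1; 7; 2]]); (2, [:: [:: 3; 3; 2; 7; 4]]); (2, [:: [:: 3; 5; 2; 7; 2]]); (2, [:: [:: 3; 6; 1; 7; 2]]); (2, [:: [:: 6; 3; 1; 7; 2]])], [:: [:: 4; 5; 2; 8; 2]; [:: 3; 3; 2; 9; 4]; [:: 4; 4; 2; 7; 4]; [:: 6; 4; 1; 8; 2]; [:: 3; 4; 2; 8; 4]; [:: 5; 3; 1; 8; 4]; [:: 3; 5; 2; 9; 2]; [:: 6; 3; 1; 9; 2]; [:: 8; 3; 1; 7; 2]; [:: 5; 4; 1; 7; 4]; [:: 5; 5; 1; 8; 2]; [:: 6; 3; 2; 8; 2]; [:: 6; 4; 2; 7; 2]; [:: 3; 5; 1; 8; 4]; [:: 4; 6; 1; 8; 2]; [:: 3; 6; 1; 9; 2]; [:: 4; 3; 2; 8; 4]; [:: 3; 8; 1; 7; 2]; [:: 4; 5; 1; 7; 4]]));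
  ([:: 3; 5; 4; 2; 7], ([:: [:: 3; 3; 4; 4; 7]; [:: 3; 5; 2; 4; 7]], [:: (1, [:: [:: 3; 5; 1; 4; 7]]); (1, [:: [:: 5; 3; 1; 4; 7]]); (1, [:: [:: 5; 5; 1; 2; 7]]); (2, [:: [:: 3; 3; 2; 4; 7]]); (2, [:: [:: 3; 5; 2; 2; 7]]); (2, [:: [:: 3; 6; 1; 2; 7]]); (2, [:: [:: 6; 3; 1; 2; 7]])], [:: [:: 4; 5; 1; 4; 7]; [:: 3; 5; 2; 2; 9]; [:: 6; 3; 1; 2; 9]; [:: 5; 5; 1; 2; 8]; [:: 6; 4; 2; 2; 7]; [:: 4; 3; 2; 4; 8]; [:: 3; 5; 1; 4; 8]; [:: 4; 6; 1; 2; 8]; [:: 3; 8; 1; 2; 7]; [:: 4; 4; 2; 4; 7]; [:: 6; 3; 2; 2; 8]; [:: 3; 3; 2; 4; 9]; [:: 3; 6; 1; 2; 9]; [:: 3; 4; 2; 4; 8]; [:: 4; 5; 2; 2; 8]; [:: 5; 3; 1; 4; 8]; [:: 5; 4; 1; 4; 7]; [:: 6; 4; 1; 2; 8]; [:: 8; 3; 1; 2; 7]]));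
  ([:: 7; 3; 4; 3; 4], ([:: [:: 7; 3; 3; 4; 4]; [:: 7; 2; 5; 3; 4]; [:: 7; 2; 3; 5; 4]], [:: (1, [:: [:: 7; 3; 3; 3; 4]]); (2, [:: [:: 7; 2; 3; 3; 4]])], [:: [:: 8; 2; 3; 4; 4]; [:: 9; 2; 3; 3; 4]; [:: 7; 2; 4; 4; 4]; [:: 8; 2; 4; 3; 4]; [:: 8; 3; 3; 3; 4]]));
  ([:: 3; 7; 4; 3; 4], ([:: [:: 2; 7; 5; 3; 4]; [:: 2; 7; 3; 5; 4]; [:: 3; 7; 3; 4; 4]], [:: (1, [:: [:: 3; 7; 3; 3; 4]]); (2, [:: [:: 2; 7; 3; 3; 4]])], [:: [:: 2; 8; 3; 4; 4]; [:: 2; 9; 3; 3; 4]; [:: 2; 8; 4; 3; 4]; [:: 2; 7; 4; 4; 4]; [:: 3; 8; 3; 3; 4]]));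
  ([:: 3; 4; 7; 3; 4], ([:: [:: 3; 3; 7; 4; 4]; [:: 2; 5; 7; 3; 4]; [:: 2; 3; 7; 5; 4]], [:: (1, [:: [:: 3; 3; 7; 3; 4]]); (2, [:: [:: 2; 3; 7; 3; 4]])], [:: [:: 2; 3; 9; 3; 4]; [:: 2; 3; 8; 4; 4]; [:: 2; 4; 7; 4; 4]; [:: 2; 4; 8; 3; 4]; [:: 3; 3; 8; 3; 4]]));
  ([:: 3; 4; 3; 7; 4], ([:: [:: 3; 3; 4; 7; 4]; [:: 2; 3; 5; 7; 4]; [:: 2; 5; 3; 7; 4]], [:: (1, [:: [:: 3; 3; 3; 7; 4]]); (2, [:: [:: 2; 3; 3; 7; 4]])], [:: [:: 2; 3; 3; 9; 4]; [:: 2; 4; 4; 7; 4]; [:: 2; 3; 4; 8; 4]; [:: 3; 3; 3; 8; 4]; [:: 2; 4; 3; 8; 4]]));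
  ([:: 3; 4; 3; 4; 7], ([:: [:: 3; 3; 4; 4; 7]; [:: 2; 5; 3; 4; 7]; [:: 2; 3; 5; 4; 7]], [:: (1, [:: [:: 3; 3; 3; 4; 7]]); (2, [:: [:: 2; 3; 3; 4; 7]])], [:: [:: 2; 4; 3; 4; 8]; [:: 3; 3; 3; 4; 8]; [:: 2; 4; 4; 4; 7]; [:: 2; 3; 4; 4; 8]; [:: 2; 3; 3; 4; 9]]));
  ([:: 7; 3; 4; 4; 3], ([:: [:: 7; 3; 3; 4; 4]; [:: 7; 2; 5; 4; 3]; [:: 7; 2; 3; 4; 5]], [:: (1, [:: [:: 7; 3; 3; 4; 3]]); (2, [:: [:: 7; 2; 3; 4; 3]])], [:: [:: 8; 3; 3; 4; 3]; [:: 8; 2; 3; 4; 4]; [:: 9; 2; 3; 4; 3]; [:: 7; 2; 4; 4; 4]; [:: 8; 2; 4; 4; 3]]));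
  ([:: 3; 7; 4; 4; 3], ([:: [:: 2; 7; 5; 4; 3]; [:: 2; 7; 3; 4; 5]; [:: 3; 7; 3; 4; 4]], [:: (1, [:: [:: 3; 7; 3; 4; 3]]); (2, [:: [:: 2; 7; 3; 4; 3]])], [:: [:: 2; 8; 3; 4; 4]; [:: 2; 9; 3; 4; 3]; [:: 2; 7; 4; 4; 4]; [:: 3; 8; 3; 4; 3]; [:: 2; 8; 4; 4; 3]]));
  ([:: 3; 4; 7; 4; 3], ([:: [:: 3; 3; 7; 4; 4]; [:: 2; 3; 7; 4; 5]; [:: 2; 5; 7; 4; 3]], [:: (1, [:: [:: 3; 3; 7; 4; 3]]); (2, [:: [:: 2; 3; 7; 4; 3]])], [:: [:: 2; 4; 8; 4; 3]; [:: 2; 3; 9; 4; 3]; [:: 2; 3; 8; 4; 4]; [:: 2; 4; 7; 4; 4]; [:: 3; 3; 8; 4; 3]]));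
  ([:: 3; 4; 4; 7; 3], ([:: [:: 3; 3; 4; 7; 4]; [:: 2; 5; 4; 7; 3]; [:: 2; 3; 4; 7; 5]], [:: (1, [:: [:: 3; 3; 4; 7; 3]]); (2, [:: [:: 2; 3; 4; 7; 3]])], [:: [:: 2; 3; 4; 9; 3]; [:: 3; 3; 4; 8; 3]; [:: 2; 4; 4; 8; 3]; [:: 2; 3; 4; 8; 4]; [:: 2; 4; 4; 7; 4]]));
  ([:: 3; 4; 4; 3; 7], ([:: [:: 3; 3; 4; 4; 7]; [:: 2; 5; 4; 3; 7]; [:: 2; 3; 4; 5; 7]], [:: (1, [:: [:: 3; 3; 4; 3; 7]]); (2, [:: [:: 2; 3; 4; 3; 7]])], [:: [:: 3; 3; 4; 3; 8]; [:: 2; 3; 4; 3; 9]; [:: 2; 4; 4; 4; 7]; [:: 2; 3; 4; 4; 8]; [:: 2; 4; 4; 3; 8]]))].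

Lemma certificates_valid : all (fun e => certifies e.1 e.2) certificates.
Proof. by vm_compute. Qed.

Lemma certified_strictly_inadmissible x :
  x \in [seq e.1 | e <- certificates] -> strictly_inadmissible x.
Proof.
case/mapP => [[x' c] x'c_in ->].
exact: certifies_strictly_inadmissible (allP certificates_valid _ x'c_in).
Qed.

Lemma certificates_cover :
  all (fun w => all (fun i => mulx i 7 (f_mon i w) \in [seq e.1 | e <- certificates])
                    (iota 1 5))
      ws.
Proof. by vm_compute. Qed.

Theorem lemma4 :
  forall w : mon, w \in ws ->
  forall i : nat, 1 <= i <= 5 ->
    strictly_inadmissible (mulx i 7 (f_mon i w)).
Proof.
move=> w w_in i /andP [i_ge1 i_le5].
apply: certified_strictly_inadmissible.
apply: (allP (allP certificates_cover w w_in)).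
by rewrite mem_iota i_ge1 add1n ltnS.
Qed.
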